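(* Let $w$ be a weight function on the unit circle, normalized and with orthonormal polynomials $\phi_n$ as described in the context. Assume that $w$ is differentiable in a neighborhood of the unit circle, has moments of all integral orders, and that the integrals $$\int_{|\zeta|=1}\frac{v'(z)-v'(\zeta)}{z-\zeta}\,\zeta^m\,w(\zeta)\,\frac{d\zeta}{i\zeta}$$ exist for all integers $m$, where $v=-\log w$. Then for every $n\ge 1$, $$\phi_n'(z)=n\frac{\kappa_{n-1}}{\kappa_n}\phi_{n-1}(z)-i\,\phi_n^*(z)\int_{|\zeta|=1}\frac{v'(z)-v'(\zeta)}{z-\zeta}\,\phi_n(\zeta)\overline{\phi_n^*(\zeta)}\,w(\zeta)\,d\zeta+i\,\phi_n(z)\int_{|\zeta|=1}\frac{v'(z)-v'(\zeta)}{z-\zeta}\,\phi_n(\zeta)\overline{\phi_n(\zeta)}\,w(\zeta)\,d\zeta .$$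
   Context: Let $w$ be a positive weight function on the unit circle normalized by $\int_{|\zeta|=1}w(\zeta)\frac{d\zeta}{i\zeta}=1$; all contour integrals over $|\zeta|=1$ are taken counterclockwise. Let $\phi_n(z)=\kappa_n z^n+\ell_n z^{n-1}+\cdots$, with $\kappa_n>0$, be the orthonormal polynomials: $\int_{|\zeta|=1}\phi_m(\zeta)\overline{\phi_n(\zeta)}w(\zeta)\frac{d\zeta}{i\zeta}=\delta_{m,n}$. The reciprocal polynomial of a degree-$n$ polynomial $f(z)=\sum_{k=0}^n a_kz^k$ is $f^*(z)=\sum_{k=0}^n\overline{a_k}z^{n-k}$. The external field is $v(z)$ defined by $w(z)=\exp(-v(z))$. *)

From Stdlib Require Import Reals.
From Coquelicot Require Import Coquelicot.
Open Scope R_scope.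

Definition cexp (z : C) : C :=
  (exp (Re z) * cos (Im z), exp (Re z) * sin (Im z)).

Definition eit (t : R) : C := (cos t, sin t).

Definition unit_circle (z : C) : Prop := Cmod z = 1.

Definition cpowZ (z : C) (m : Z) : C :=
  match m with
  | Z0 => (RtoC 1)
  | Zpos p => pow_n z (Pos.to_nat p)
  | Zneg p => pow_n (Cinv z) (Pos.to_nat p)
  end.

Definition peval (c : nat -> C) (n : nat) (z : C) : C :=
  sum_n (fun k => Cmult (c k) (pow_n z k)) n.

Definition precip (c : nat -> C) (n : nat) (z : C) : C :=
  sum_n (fun k => Cmult (Cconj (c k)) (pow_n z (n - k))) n.

(* contour integrals over |zeta| = 1, counterclockwise, zeta = e^{i t}:
   cint_dm f  = \int f(zeta) dzeta/(i zeta) = \int_0^{2pi} f(e^{it}) dt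
   cint_dz f  = \int f(zeta) dzeta          = \int_0^{2pi} f(e^{it}) i e^{it} dt *)
Definition cint_dm (f : C -> C) : C :=
  @RInt C_R_CompleteNormedModule (fun t => f (eit t)) 0 (2 * PI).
Definition cint_dz (f : C -> C) : C :=
  @RInt C_R_CompleteNormedModule
    (fun t => Cmult (f (eit t)) (Cmult Ci (eit t))) 0 (2 * PI).
Definition ex_cint_dm (f : C -> C) : Prop :=
  @ex_RInt C_R_NormedModule (fun t => f (eit t)) 0 (2 * PI).

(* The polynomial [(phi_n(z) phi_n^*(zeta) - phi_n^*(z) phi_n(zeta)) / (z - zeta)], times
   [conj(zeta)^(n-1)], is on the circle the Christoffel-Darboux kernel [K_n(z, zeta)].
   Orthonormality alone shows that [K_n] reproduces the polynomials of degree < n and is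
   orthogonal to [phi_n]. Integrate [v'(zeta) phi_n(zeta) K_n(z, zeta) w(zeta)] over the
   circle in two ways. Splitting [v'(zeta) = v'(z) - (v'(z) - v'(zeta))] and using
   [conj phi_n = conj(zeta)^n phi_n^*] on the circle produces the two integrals of the
   statement. Since [v' w = - w'], integrating by parts monomial by monomial
   ([int v' zeta^(m+1) w = m int zeta^m w]) produces instead [phi_n'(z)] minus
   [n / kappa_n] times the top coefficient of [K_n], which the reproducing property
   identifies as [kappa_(n-1) phi_(n-1)(z)]. The integration by parts needs the fundamental
   theorem of calculus for a derivative that is only known to be Riemann integrable. *)

From Stdlib Require Import Reals Lra Lia ZArith ClassicalEpsilon.
From Coquelicot Require Import Coquelicot.
Open Scope R_scope.

Lemma C_ext (x y : C) : fst x = fst y -> snd x = snd y -> x = y.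
Proof. destruct x, y; simpl; intros -> ->; reflexivity. Qed.

(* Coquelicot's generic sum lemmas state equalities in [AbelianMonoid.sort _];
   [ring] only recognizes them once retyped at [C]. *)
Ltac Cring := match goal with |- @eq _ ?x ?y => change (@eq C x y); ring end.

Section ComplexAlgebra.
Local Open Scope C_scope.

Lemma Cmult_reg_l (x y y' : C) : x <> 0 -> x * y = x * y' -> y = y'.
Proof.
  intros Hx H. replace y with (/ x * (x * y)) by (field; exact Hx).
  rewrite H. field. exact Hx.
Qed.

Lemma sum_n_CS (f : nat -> C) N : sum_n f (S N) = sum_n f N + f (S N).
Proof. exact (sum_Sn (G := C_AbelianMonoid) f N). Qed.

Lemma sum_n_Cplus (f g : nat -> C) N :
  sum_n (fun k => f k + g k) N = sum_n f N + sum_n g N.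
Proof. exact (sum_n_plus (G := C_AbelianMonoid) f g N). Qed.

Lemma sum_n_Cmult_l (c : C) (f : nat -> C) N :
  sum_n (fun k => c * f k) N = c * sum_n f N.
Proof. exact (sum_n_mult_l (K := C_Ring) c f N). Qed.

Lemma sum_n_Cmult_r (c : C) (f : nat -> C) N :
  sum_n (fun k => f k * c) N = sum_n f N * c.
Proof. exact (sum_n_mult_r (K := C_Ring) c f N). Qed.

Lemma sum_n_Cminus (f g : nat -> C) N :
  sum_n (fun k => f k - g k) N = sum_n f N - sum_n g N.
Proof.
  induction N as [|N IH]; [rewrite !sum_O; reflexivity|].
  rewrite !sum_n_CS, IH; Cring.
Qed.

Lemma sum_n_C0 (f : nat -> C) N :
  (forall k, (k <= N)%nat -> f k = 0) -> sum_n f N = 0 :> C.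
Proof.
  induction N as [|N IH]; intros Hf; [rewrite sum_O; apply Hf; lia|].
  rewrite sum_n_CS, IH by (intros; apply Hf; lia). rewrite Hf by lia. ring.
Qed.

Lemma sum_n_single (f : nat -> C) N k : (k <= N)%nat ->
  (forall i, (i <= N)%nat -> i <> k -> f i = 0) -> sum_n f N = f k.
Proof.
  induction N as [|N IH]; intros Hk Hf.
  - replace k with 0%nat by lia. apply sum_O.
  - rewrite sum_n_CS. destruct (Nat.eq_dec k (S N)) as [->|Hne].
    + rewrite sum_n_C0 by (intros i Hi; apply Hf; lia). Cring.
    + rewrite IH, (Hf (S N)) by (lia || (intros; apply Hf; lia)). Cring.
Qed.

Lemma sum_n_shift (f : nat -> C) N :
  sum_n f (S N) = f 0%nat + sum_n (fun k => f (S k)) N.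
Proof.
  induction N as [|N IH].
  - rewrite sum_n_CS, !sum_O. reflexivity.
  - rewrite sum_n_CS, IH, sum_n_CS. Cring.
Qed.

Lemma sum_n_rev (f : nat -> C) N : sum_n f N = sum_n (fun k => f (N - k)%nat) N :> C.
Proof.
  induction N as [|N IH]; [rewrite !sum_O; reflexivity|].
  rewrite sum_n_CS, sum_n_shift, IH. cbn [Nat.sub]. ring.
Qed.

Lemma Cconj_sum_n (f : nat -> C) N : Cconj (sum_n f N) = sum_n (fun k => Cconj (f k)) N.
Proof.
  induction N as [|N IH]; [rewrite !sum_O; reflexivity|].
  rewrite !sum_n_CS, <- IH. apply Cplus_conj.
Qed.

Lemma Cconj_pow_n (x : C) k : Cconj (pow_n x k) = pow_n (Cconj x) k.
Proof.
  induction k as [|k IH]; simpl.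
  - apply C_ext; simpl; ring.
  - change (Cconj (x * pow_n x k) = Cconj x * pow_n (Cconj x) k).
    rewrite Cmult_conj, IH. reflexivity.
Qed.

Lemma pow_n_Cmult (x y : C) k : pow_n (x * y) k = pow_n x k * pow_n y k.
Proof.
  induction k as [|k IH]; simpl; [change (RtoC 1 = RtoC 1 * RtoC 1); ring|].
  change (x * y * pow_n (x * y) k = x * pow_n x k * (y * pow_n y k)). rewrite IH. ring.
Qed.

Lemma pow_n_C1 k : pow_n (RtoC 1) k = 1 :> C.
Proof.
  induction k as [|k IH]; [reflexivity|].
  change (RtoC 1 * pow_n (RtoC 1) k = RtoC 1). rewrite IH. ring.
Qed.

End ComplexAlgebra.

Section UnitCircle.
Local Open Scope C_scope.

Lemma eit_add s t : eit (s + t) = eit s * eit t.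
Proof. unfold eit; apply C_ext; simpl; rewrite ?cos_plus, ?sin_plus; ring. Qed.

Lemma eit_0 : eit 0 = 1.
Proof. unfold eit; rewrite cos_0, sin_0; reflexivity. Qed.

Lemma eit_2PI : eit (2 * PI) = eit 0.
Proof. unfold eit; rewrite cos_2PI, sin_2PI, cos_0, sin_0; reflexivity. Qed.

Lemma Cconj_eit t : Cconj (eit t) = eit (- t).
Proof. unfold eit; apply C_ext; simpl; rewrite ?cos_neg, ?sin_neg; ring. Qed.

Lemma cos_sq_add_sin_sq t : (cos t * cos t + sin t * sin t = 1)%R.
Proof. pose proof (sin2_cos2 t). unfold Rsqr in *. lra. Qed.

Lemma unit_circle_eit t : unit_circle (eit t).
Proof.
  unfold unit_circle, Cmod, eit; simpl. rewrite !Rmult_1_r, cos_sq_add_sin_sq. apply sqrt_1.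
Qed.

Lemma eit_mul_conj t : eit t * Cconj (eit t) = 1.
Proof. rewrite Cconj_eit, <- eit_add, Rplus_opp_r. apply eit_0. Qed.

Lemma Cinv_eit t : / eit t = Cconj (eit t).
Proof.
  unfold eit, Cinv, Cconj; apply C_ext; simpl; rewrite !Rmult_1_r, cos_sq_add_sin_sq; field.
Qed.

Lemma pow_n_eit t k : pow_n (eit t) k = eit (INR k * t).
Proof.
  induction k as [|k IH].
  - rewrite Rmult_0_l, eit_0. reflexivity.
  - change (eit t * pow_n (eit t) k = eit (INR (S k) * t)).
    rewrite IH, S_INR, <- eit_add. f_equal; ring.
Qed.

Lemma cpowZ_eit t m : cpowZ (eit t) m = eit (IZR m * t).
Proof.
  destruct m as [|p|p]; simpl.
  - rewrite Rmult_0_l, eit_0. reflexivity.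
  - rewrite pow_n_eit, INR_IPR. reflexivity.
  - rewrite Cinv_eit, Cconj_eit, pow_n_eit, INR_IPR.
    change (IZR (Z.neg p)) with (- IPR p)%R. f_equal; ring.
Qed.

Lemma cpowZ_eit_add t m k : cpowZ (eit t) m * cpowZ (eit t) k = cpowZ (eit t) (m + k).
Proof. rewrite !cpowZ_eit, <- eit_add, plus_IZR. f_equal; ring. Qed.

Lemma cpowZ_eit_succ t m : cpowZ (eit t) (m + 1) = cpowZ (eit t) m * eit t.
Proof. rewrite <- cpowZ_eit_add, (cpowZ_eit _ 1), Rmult_1_l. reflexivity. Qed.

Lemma cpowZ_eit_of_nat t k : pow_n (eit t) k = cpowZ (eit t) (Z.of_nat k).
Proof. rewrite cpowZ_eit, pow_n_eit, <- INR_IZR_INZ. reflexivity. Qed.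

Lemma cpowZ_eit_opp_nat t k : pow_n (Cconj (eit t)) k = cpowZ (eit t) (- Z.of_nat k).
Proof. rewrite cpowZ_eit, Cconj_eit, pow_n_eit, opp_IZR, <- INR_IZR_INZ. f_equal; ring. Qed.

Lemma pow_n_eit_mul_conj t k n : (k <= n)%nat ->
  pow_n (eit t) k * pow_n (Cconj (eit t)) n = pow_n (Cconj (eit t)) (n - k).
Proof.
  intros Hkn. replace n with (k + (n - k))%nat at 1 by lia.
  rewrite (pow_n_plus (K := C_Ring)). change mult with Cmult.
  rewrite Cmult_assoc, <- pow_n_Cmult, eit_mul_conj, pow_n_C1. ring.
Qed.

Lemma eit_mul_conj_pow_n t n :
  eit t * pow_n (Cconj (eit t)) n = cpowZ (eit t) (1 - Z.of_nat n).
Proof.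
  rewrite cpowZ_eit_opp_nat, <- Z.add_opp_r, <- cpowZ_eit_add, (cpowZ_eit _ 1), Rmult_1_l.
  reflexivity.
Qed.

End UnitCircle.

Definition is_circ_int (f : R -> C) (l : C) : Prop :=
  @is_RInt C_R_NormedModule f 0 (2 * PI) l.

Section CircleIntegral.
Local Open Scope C_scope.

Lemma is_circ_int_ext f g l : (forall t, f t = g t) -> is_circ_int f l -> is_circ_int g l.
Proof. intros H. apply is_RInt_ext. intros t _. apply H. Qed.

Lemma is_circ_int_eq f l l' : l = l' -> is_circ_int f l -> is_circ_int f l'.
Proof. intros -> H; exact H. Qed.

Lemma is_circ_int_unique f l l' : is_circ_int f l -> is_circ_int f l' -> l = l'.
Proof.
  intros H H'. unfold is_circ_int in *.
  rewrite <- (is_RInt_unique (V := C_R_CompleteNormedModule) f 0 (2 * PI) l H).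
  exact (is_RInt_unique (V := C_R_CompleteNormedModule) f 0 (2 * PI) l' H').
Qed.

Lemma is_circ_int_0 : is_circ_int (fun _ => 0) 0.
Proof.
  eapply is_circ_int_eq; [|exact (is_RInt_const (V := C_R_NormedModule) 0 (2 * PI) (RtoC 0))].
  apply C_ext; simpl; change (scal ?x ?y) with (x * y)%R; ring.
Qed.

Lemma is_circ_int_RInt f : ex_cint_dm f ->
  is_circ_int (fun t => f (eit t)) (cint_dm f).
Proof. apply (RInt_correct (V := C_R_CompleteNormedModule)). Qed.

Lemma is_circ_int_plus f g lf lg : is_circ_int f lf -> is_circ_int g lg ->
  is_circ_int (fun t => f t + g t) (lf + lg).
Proof. intros Hf Hg. exact (is_RInt_plus _ _ _ _ _ _ Hf Hg). Qed.

Lemma is_circ_int_minus f g lf lg : is_circ_int f lf -> is_circ_int g lg ->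
  is_circ_int (fun t => f t - g t) (lf - lg).
Proof. intros Hf Hg. exact (is_RInt_minus _ _ _ _ _ _ Hf Hg). Qed.

Lemma is_circ_int_sum (f : nat -> R -> C) (l : nat -> C) N :
  (forall k, (k <= N)%nat -> is_circ_int (f k) (l k)) ->
  is_circ_int (fun t => sum_n (fun k => f k t) N) (sum_n l N).
Proof.
  induction N as [|N IH]; intros H.
  - rewrite sum_O. eapply is_circ_int_ext; [|apply H; lia].
    intros t; rewrite sum_O; reflexivity.
  - rewrite sum_n_CS.
    apply (is_circ_int_ext (fun t => sum_n (fun k => f k t) N + f (S N) t)).
    + intros t. symmetry. apply sum_n_CS.
    + apply is_circ_int_plus; [apply IH; intros k Hk|]; apply H; lia.
Qed.

Lemma is_circ_int_components f l :
  is_circ_int f l <->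
  is_RInt (fun t => fst (f t)) 0 (2 * PI) (fst l) /\
  is_RInt (fun t => snd (f t)) 0 (2 * PI) (snd l).
Proof.
  split.
  - intros H. split; [exact (is_RInt_fct_extend_fst _ _ _ _ H)
                    |exact (is_RInt_fct_extend_snd _ _ _ _ H)].
  - intros [H1 H2]. destruct l as [l1 l2].
    eapply is_circ_int_ext;
      [|exact (is_RInt_fct_extend_pair (U := R_NormedModule) (V := R_NormedModule)
                 (fun t => (fst (f t), snd (f t))) 0 (2 * PI) l1 l2 H1 H2)].
    intros t; simpl. destruct (f t); reflexivity.
Qed.

Lemma is_circ_int_Cmult_l (c : C) f l : is_circ_int f l ->
  is_circ_int (fun t => c * f t) (c * l).
Proof.
  rewrite !is_circ_int_components; simpl. intros [H1 H2]. split.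
  - exact (is_RInt_minus _ _ _ _ _ _ (is_RInt_scal _ _ _ (fst c) _ H1)
                                      (is_RInt_scal _ _ _ (snd c) _ H2)).
  - exact (is_RInt_plus _ _ _ _ _ _ (is_RInt_scal _ _ _ (fst c) _ H2)
                                     (is_RInt_scal _ _ _ (snd c) _ H1)).
Qed.

Lemma is_circ_int_Cconj f l : is_circ_int f l ->
  is_circ_int (fun t => Cconj (f t)) (Cconj l).
Proof.
  rewrite !is_circ_int_components; simpl. intros [H1 H2]. split; [exact H1|].
  exact (is_RInt_opp _ _ _ _ H2).
Qed.

End CircleIntegral.

(** * Fundamental theorem of calculus for integrable derivatives *)

Lemma sorted_head_le_last (l : list R) (y : R) : sorted Rle (y :: l) -> y <= seq.last y l.
Proof.
  revert y; induction l as [|z l IH]; intros y H; simpl; [lra|].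
  destruct H as [H1 H2]. specialize (IH z H2). lra.
Qed.

Section MeanValueTags.
Variables (F f : R -> R) (a b : R) (tag : R -> R -> R).
Hypothesis tag_MVT : forall x y, a <= x -> x <= y -> y <= b ->
  F y - F x = f (tag x y) * (y - x).

Lemma Riemann_sum_MVT_telescope (l : list R) (x t0 : R) :
  sorted Rle (x :: l) -> a <= x -> seq.last x l <= b ->
  seq.foldr plus zero
    (seq.pairmap (fun p q : R * R => scal (fst q - fst p) (f (snd q))) (x, t0)
       (seq.pairmap (fun x y : R => (y, tag x y)) x l)) = F (seq.last x l) - F x.
Proof.
  revert x t0; induction l as [|y l IH]; intros x t0 Hs Ha Hb; simpl.
  - unfold zero; simpl; ring.
  - simpl in Hb. destruct Hs as [Hxy Hs].
    pose proof (sorted_head_le_last l y Hs).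
    rewrite IH by (assumption || lra).
    unfold plus, scal; simpl; unfold mult; simpl.
    rewrite (Rmult_comm (y - x)), <- (tag_MVT x y) by lra. ring.
Qed.

End MeanValueTags.

Lemma MVT_tag_exists (F f : R -> R) (a b : R) :
  (forall x, a <= x <= b -> is_derive F x (f x)) ->
  exists tag : R -> R -> R, (forall x y, x <= y -> x <= tag x y <= y) /\
    (forall x y, a <= x -> x <= y -> y <= b -> F y - F x = f (tag x y) * (y - x)).
Proof.
  intros Hd.
  set (P x y c := x <= c <= y /\ (a <= x -> y <= b -> F y - F x = f c * (y - x))).
  assert (HP : forall x y, x <= y -> exists c, P x y c).
  { intros x y Hxy. destruct (Rle_dec a x) as [Hax|Hax];
      [destruct (Rle_dec y b) as [Hyb|Hyb]|].
    - destruct (MVT_gen F x y f) as [c [Hc1 Hc2]].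
      + intros u Hu. rewrite Rmin_left, Rmax_right in Hu by lra. apply Hd; lra.
      + intros u Hu. rewrite Rmin_left, Rmax_right in Hu by lra.
        apply continuity_pt_filterlim, (ex_derive_continuous F).
        exists (f u). apply Hd; lra.
      + rewrite Rmin_left, Rmax_right in Hc1 by lra. exists c. split; auto.
    - exists x. split; [lra|intros; lra].
    - exists x. split; [lra|intros; lra]. }
  exists (fun x y => match Rle_dec x y with
                     | left Hxy => proj1_sig (constructive_indefinite_description _ (HP x y Hxy))
                     | right _ => x end).
  split.
  - intros x y Hxy. destruct (Rle_dec x y) as [H|H]; [|lra].
    destruct constructive_indefinite_description as [c Hc]. apply Hc.
  - intros x y Hax Hxy Hyb. destruct (Rle_dec x y) as [H|H]; [|lra].
    destruct constructive_indefinite_description as [c Hc]. apply Hc; lra.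
Qed.

(* Coquelicot's [is_RInt_derive] requires a continuous derivative; this version
   only needs the derivative to be Riemann integrable. *)
Lemma is_RInt_derive_integrable (F f : R -> R) (a b : R) : a < b ->
  (forall x, a <= x <= b -> is_derive F x (f x)) -> ex_RInt f a b ->
  is_RInt f a b (F b - F a).
Proof.
  intros Hab Hd [l Hl].
  destruct (MVT_tag_exists F f a b Hd) as [tag [Htag Htag_MVT]].
  replace (F b - F a) with l; [exact Hl|].
  apply Rminus_diag_uniq_sym, Rabs_eq_0, Rle_antisym; [|apply Rabs_pos].
  apply le_epsilon. intros eps Heps. rewrite Rplus_0_l.
  destruct (Hl (ball l (mkposreal eps Heps)) (locally_ball l _)) as [d Hdl].
  destruct (seq_step_unif_part_ex a b d) as [N HN].
  destruct (Riemann_fine_unif_part tag a b N Htag ltac:(lra)) as [_ [Hs2 [Hs3 Hs4]]].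
  assert (Hsize : (0 < seq.size (unif_part a b N))%nat)
    by (unfold unif_part; rewrite seq.size_mkseq; lia).
  specialize (Hdl (SF_seq_f2 tag (unif_part a b N))).
  rewrite SF_lx_f2 in Hdl, Hs4 by exact Hsize.
  rewrite Rmin_left, Rmax_right in Hdl by lra.
  specialize (Hdl HN (conj Hs2 (conj Hs3 Hs4))).
  rewrite sign_eq_1 in Hdl by lra.
  assert (HR : Riemann_sum f (SF_seq_f2 tag (unif_part a b N)) = F b - F a).
  { pose proof (unif_part_sort a b N ltac:(lra)) as Hso.
    destruct (unif_part a b N) as [|x0 l0]; [simpl in Hsize; lia|].
    simpl in Hs3, Hs4. unfold Riemann_sum, SF_seq_f2.
    cbn [seq.head seq.behead SF_h SF_t].
    refine (eq_trans (Riemann_sum_MVT_telescope F f a b tag Htag_MVT l0 x0 zero Hso _ _) _);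
      subst; [lra|lra|reflexivity]. }
  change (Rabs (1 * Riemann_sum f (SF_seq_f2 tag (unif_part a b N)) - l) < eps) in Hdl.
  rewrite HR, Rmult_1_l in Hdl. unfold Rminus in *. lra.
Qed.

Lemma is_circ_int_derive_periodic (G g : R -> C) (l : C) :
  (forall t, is_derive (fun s => fst (G s)) t (fst (g t))) ->
  (forall t, is_derive (fun s => snd (G s)) t (snd (g t))) ->
  G (2 * PI) = G 0 -> is_circ_int g l -> l = RtoC 0.
Proof.
  intros D1 D2 Hper Hg. pose proof PI_RGT_0.
  pose proof Hg as [Hg1 Hg2]%is_circ_int_components.
  assert (F1 := is_RInt_derive_integrable _ _ 0 (2 * PI) ltac:(lra)
                  (fun x _ => D1 x) (ex_intro _ _ Hg1)).
  assert (F2 := is_RInt_derive_integrable _ _ 0 (2 * PI) ltac:(lra)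
                  (fun x _ => D2 x) (ex_intro _ _ Hg2)).
  cbv beta in F1, F2. rewrite Hper, Rminus_diag in F1, F2.
  apply C_ext; simpl.
  - rewrite <- (is_RInt_unique _ _ _ _ Hg1). exact (is_RInt_unique _ _ _ _ F1).
  - rewrite <- (is_RInt_unique _ _ _ _ Hg2). exact (is_RInt_unique _ _ _ _ F2).
Qed.

(** * Integration by parts on the circle *)

Lemma abs_fst_le_Cmod (z : C) : Rabs (fst z) <= Cmod z.
Proof. pose proof (Rmax_Cmod z). pose proof (Rmax_l (Rabs (fst z)) (Rabs (snd z))). lra. Qed.

Lemma abs_snd_le_Cmod (z : C) : Rabs (snd z) <= Cmod z.
Proof. pose proof (Rmax_Cmod z). pose proof (Rmax_r (Rabs (fst z)) (Rabs (snd z))). lra. Qed.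

Lemma Cmod_le_abs_fst_snd (z : C) : Cmod z <= Rabs (fst z) + Rabs (snd z).
Proof.
  destruct z as [x y]; unfold Cmod; simpl.
  pose proof (Rabs_pos x); pose proof (Rabs_pos y).
  rewrite <- (sqrt_square (Rabs x + Rabs y)) by lra.
  apply sqrt_le_1_alt. pose proof (pow2_abs x); pose proof (pow2_abs y).
  simpl in *. nra.
Qed.

Lemma is_derive_eps (F : R -> R) (t l : R) : is_derive F t l ->
  forall eps, 0 < eps -> exists delta, 0 < delta /\ forall h, Rabs h < delta ->
    Rabs (F (t + h) - F t - h * l) <= eps * Rabs h.
Proof.
  intros [_ H] eps Heps.
  destruct (H t (fun P HP => HP) (mkposreal eps Heps)) as [delta Hdelta].
  exists delta. split; [apply cond_pos|]. intros h Hh.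
  assert (Hb : ball t delta (t + h))
    by (change (Rabs (t + h - t) < delta); replace (t + h - t) with h by ring; exact Hh).
  specialize (Hdelta (t + h) Hb).
  change (Rabs (F (t + h) - F t - (t + h - t) * l) <= eps * Rabs (t + h - t)) in Hdelta.
  replace (t + h - t) with h in Hdelta by ring. exact Hdelta.
Qed.

Lemma is_derive_of_eps (F : R -> R) (t l : R) :
  (forall eps, 0 < eps -> exists delta, 0 < delta /\ forall h, Rabs h < delta ->
     Rabs (F (t + h) - F t - h * l) <= eps * Rabs h) ->
  is_derive F t l.
Proof.
  intros H. apply is_derive_Reals. intros eps Heps.
  destruct (H (eps / 2) ltac:(lra)) as [delta [Hdelta Hbound]].
  exists (mkposreal delta Hdelta). intros h Hh0 Hh; simpl in Hh.
  specialize (Hbound h Hh). pose proof (Rabs_pos_lt h Hh0).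
  replace ((F (t + h) - F t) / h - l) with ((F (t + h) - F t - h * l) / h) by (field; auto).
  unfold Rdiv. rewrite Rabs_mult, Rabs_inv.
  apply Rle_lt_trans with (eps / 2); [|lra].
  apply (Rmult_le_reg_r (Rabs h)); auto. field_simplify; lra.
Qed.

Lemma is_derive_C_eps (f : C -> C) (x d : C) :
  @is_derive C_AbsRing C_NormedModule f x d ->
  forall eps, 0 < eps -> exists delta, 0 < delta /\ forall y, Cmod (Cminus y x) < delta ->
    Cmod (Cminus (Cminus (f y) (f x)) (Cmult (Cminus y x) d)) <= eps * Cmod (Cminus y x).
Proof.
  intros [_ H] eps Heps.
  destruct (H x (fun P HP => HP) (mkposreal eps Heps)) as [delta Hdelta].
  exists delta. split; [apply cond_pos|]. exact Hdelta.
Qed.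

(* Coquelicot's [is_derive] uses a single scalar ring for domain and codomain, so
   it cannot compose a C-differentiable map with a real parametrization. *)
Definition is_curve_derive (g : R -> C) (t : R) (L : C) : Prop :=
  forall eps, 0 < eps -> exists delta, 0 < delta /\ forall h, Rabs h < delta ->
    Cmod (Cminus (Cminus (g (t + h)) (g t)) (Cmult (RtoC h) L)) <= eps * Rabs h.

Lemma is_curve_derive_components (g : R -> C) (t : R) (L : C) :
  is_curve_derive g t L <->
  is_derive (fun s => fst (g s)) t (fst L) /\ is_derive (fun s => snd (g s)) t (snd L).
Proof.
  split.
  - intros H. split; apply is_derive_of_eps; intros eps Heps;
      destruct (H eps Heps) as [delta [Hdelta Hbound]]; exists delta; split; auto;
      intros h Hh; specialize (Hbound h Hh); eapply Rle_trans; try exact Hbound.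
    + eapply Rle_trans; [|apply abs_fst_le_Cmod]. simpl. right; f_equal; ring.
    + eapply Rle_trans; [|apply abs_snd_le_Cmod]. simpl. right; f_equal; ring.
  - intros [H1 H2] eps Heps.
    destruct (is_derive_eps _ _ _ H1 (eps / 2) ltac:(lra)) as [d1 [Hd1 Hb1]].
    destruct (is_derive_eps _ _ _ H2 (eps / 2) ltac:(lra)) as [d2 [Hd2 Hb2]].
    exists (Rmin d1 d2). split; [apply Rmin_glb_lt; auto|]. intros h Hh.
    specialize (Hb1 h (Rlt_le_trans _ _ _ Hh (Rmin_l _ _))).
    specialize (Hb2 h (Rlt_le_trans _ _ _ Hh (Rmin_r _ _))).
    eapply Rle_trans; [apply Cmod_le_abs_fst_snd|]. simpl.
    replace (fst (g (t + h)) + - fst (g t) + - (h * fst L - 0 * snd L))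
      with (fst (g (t + h)) - fst (g t) - h * fst L) by ring.
    replace (snd (g (t + h)) + - snd (g t) + - (h * snd L + 0 * fst L))
      with (snd (g (t + h)) - snd (g t) - h * snd L) by ring.
    lra.
Qed.

Lemma is_curve_derive_lipschitz (g : R -> C) (t : R) (L : C) : is_curve_derive g t L ->
  exists delta, 0 < delta /\ forall h, Rabs h < delta ->
    Cmod (Cminus (g (t + h)) (g t)) <= (Cmod L + 1) * Rabs h.
Proof.
  intros Hg. destruct (Hg 1 Rlt_0_1) as [delta [Hdelta Hbound]].
  exists delta. split; auto. intros h Hh. specialize (Hbound h Hh).
  replace (Cminus (g (t + h)) (g t))
    with (Cplus (Cminus (Cminus (g (t + h)) (g t)) (Cmult (RtoC h) L)) (Cmult (RtoC h) L))
    by ring.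
  eapply Rle_trans; [apply Cmod_triangle|]. rewrite Cmod_mult, Cmod_R. lra.
Qed.

Lemma is_curve_derive_comp (f : C -> C) (g : R -> C) (t : R) (d L : C) :
  @is_derive C_AbsRing C_NormedModule f (g t) d -> is_curve_derive g t L ->
  is_curve_derive (fun s => f (g s)) t (Cmult L d).
Proof.
  intros Hf Hg eps Heps.
  set (A := Cmod L + 1).
  assert (HA : 0 < A) by (pose proof (Cmod_ge_0 L); unfold A; lra).
  pose proof (Cmod_ge_0 d) as Hd0.
  destruct (is_curve_derive_lipschitz _ _ _ Hg) as [d1 [Hd1 Hlip]].
  destruct (Hg (eps / (2 * (Cmod d + 1)))) as [d2 [Hd2 Hg2]].
  { apply Rdiv_lt_0_compat; lra. }
  destruct (is_derive_C_eps f (g t) d Hf (eps / (2 * A))) as [d3 [Hd3 Hf3]].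
  { apply Rdiv_lt_0_compat; lra. }
  exists (Rmin d1 (Rmin d2 (d3 / A))). split.
  { repeat apply Rmin_glb_lt; auto. apply Rdiv_lt_0_compat; lra. }
  intros h Hh.
  apply Rmin_Rgt in Hh as [H1 Hh]. apply Rmin_Rgt in Hh as [H2 H3].
  specialize (Hlip h H1). specialize (Hg2 h H2). fold A in Hlip.
  set (D := Cminus (g (t + h)) (g t)) in *.
  assert (HD : Cmod D < d3).
  { apply Rle_lt_trans with (A * Rabs h); [exact Hlip|].
    replace d3 with (A * (d3 / A)) by (field; lra). apply Rmult_lt_compat_l; lra. }
  specialize (Hf3 (g (t + h)) HD). fold D in Hf3.
  replace (Cminus (Cminus (f (g (t + h))) (f (g t))) (Cmult (RtoC h) (Cmult L d)))
    with (Cplus (Cminus (Cminus (f (g (t + h))) (f (g t))) (Cmult D d))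
                (Cmult (Cminus D (Cmult (RtoC h) L)) d)) by (unfold D; ring).
  eapply Rle_trans; [apply Cmod_triangle|]. rewrite Cmod_mult.
  assert (E1 : eps / (2 * A) * Cmod D <= eps / 2 * Rabs h).
  { replace (eps / 2 * Rabs h) with (eps / (2 * A) * (A * Rabs h)) by (field; lra).
    apply Rmult_le_compat_l; [apply Rlt_le, Rdiv_lt_0_compat|]; lra. }
  assert (E2 : Cmod (Cminus D (Cmult (RtoC h) L)) * Cmod d <= eps / 2 * Rabs h).
  { replace (eps / 2 * Rabs h) with (eps / (2 * (Cmod d + 1)) * Rabs h * (Cmod d + 1))
      by (field; lra).
    apply Rmult_le_compat; [apply Cmod_ge_0|apply Cmod_ge_0|exact Hg2|lra]. }
  lra.
Qed.

Lemma is_curve_derive_eit (t : R) : is_curve_derive eit t (Cmult Ci (eit t)).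
Proof.
  apply is_curve_derive_components; unfold eit; simpl; split; auto_derive; auto; ring.
Qed.

Lemma is_derive_comp_eit (v : C -> C) (t : R) (d : C) :
  @is_derive C_AbsRing C_NormedModule v (eit t) d ->
  is_derive (fun s => fst (v (eit s))) t (fst (Cmult (Cmult Ci (eit t)) d)) /\
  is_derive (fun s => snd (v (eit s))) t (snd (Cmult (Cmult Ci (eit t)) d)).
Proof.
  intros Hv. apply is_curve_derive_components, is_curve_derive_comp; [exact Hv|].
  apply is_curve_derive_eit.
Qed.

Section IntegrationByParts.
Local Open Scope C_scope.
Variables (w v dv : C -> C).
Hypothesis w_exp : forall t, w (eit t) = cexp (- v (eit t)).
Hypothesis v_derive : forall t, @is_derive C_AbsRing C_NormedModule v (eit t) (dv (eit t)).

Lemma weight_mul_cpowZ_eit (m : Z) (t : R) :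
  w (eit t) * cpowZ (eit t) m =
  ((exp (- fst (v (eit t))) * cos (IZR m * t - snd (v (eit t))))%R,
   (exp (- fst (v (eit t))) * sin (IZR m * t - snd (v (eit t))))%R).
Proof.
  rewrite w_exp, cpowZ_eit. unfold cexp, eit. apply C_ext; simpl;
    rewrite ?cos_minus, ?sin_minus, ?cos_neg, ?sin_neg; ring.
Qed.

Lemma is_derive_weight_mul_cpowZ_eit (m : Z) (t : R) :
  is_derive (fun s => fst (w (eit s) * cpowZ (eit s) m)) t
    (fst (w (eit t) * cpowZ (eit t) m * (Ci * IZR m - Ci * eit t * dv (eit t)))) /\
  is_derive (fun s => snd (w (eit s) * cpowZ (eit s) m)) t
    (snd (w (eit t) * cpowZ (eit t) m * (Ci * IZR m - Ci * eit t * dv (eit t)))).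
Proof.
  destruct (is_derive_comp_eit v t _ (v_derive t)) as [D1 D2].
  set (V1 s := fst (v (eit s))) in D1. set (V2 s := snd (v (eit s))) in D2.
  rewrite weight_mul_cpowZ_eit. fold (V1 t) (V2 t).
  split; [apply (is_derive_ext (fun s => exp (- V1 s) * cos (IZR m * s - V2 s))%R)
         |apply (is_derive_ext (fun s => exp (- V1 s) * sin (IZR m * s - V2 s))%R)];
    try (intros s; rewrite weight_mul_cpowZ_eit; reflexivity);
    auto_derive; try (repeat split; eexists; eauto);
    replace (Derive (fun x => V1 x) t) with (fst (Ci * eit t * dv (eit t)))
      by (symmetry; apply is_derive_unique, D1);
    replace (Derive (fun x => V2 x) t) with (snd (Ci * eit t * dv (eit t)))
      by (symmetry; apply is_derive_unique, D2);
    simpl; unfold Rminus; ring.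
Qed.

(* [t |-> w(e^{it}) e^{imt}] is periodic, so the integral of its derivative vanishes. *)
Lemma integral_dv_cpowZ_by_parts (m : Z) (M J : C) :
  is_circ_int (fun t => cpowZ (eit t) m * w (eit t)) M ->
  is_circ_int (fun t => dv (eit t) * cpowZ (eit t) (m + 1) * w (eit t)) J ->
  J = IZR m * M.
Proof.
  intros HM HJ.
  assert (Hg : is_circ_int
    (fun t => w (eit t) * cpowZ (eit t) m * (Ci * IZR m - Ci * eit t * dv (eit t)))
    (Ci * (IZR m * M - J))).
  { eapply is_circ_int_ext;
      [|apply is_circ_int_Cmult_l, is_circ_int_minus; [apply is_circ_int_Cmult_l, HM|exact HJ]].
    intros t. simpl. rewrite cpowZ_eit_succ. ring. }
  assert (H0 := is_circ_int_derive_periodic (fun s => w (eit s) * cpowZ (eit s) m) _ _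
    (fun t => proj1 (is_derive_weight_mul_cpowZ_eit m t))
    (fun t => proj2 (is_derive_weight_mul_cpowZ_eit m t))
    ltac:(cbv beta; rewrite eit_2PI; reflexivity) Hg).
  assert (E : IZR m * M - J = - Ci * (Ci * (IZR m * M - J))) by (apply C_ext; simpl; ring).
  rewrite H0, Cmult_0_r in E.
  replace J with (IZR m * M - (IZR m * M - J)) by ring. rewrite E. ring.
Qed.

End IntegrationByParts.

Section Polynomials.
Local Open Scope C_scope.

Lemma pow_n_CS (x : C) k : pow_n x (S k) = x * pow_n x k.
Proof. reflexivity. Qed.

Lemma pow_n_C0 (x : C) : pow_n x 0 = 1 :> C.
Proof. reflexivity. Qed.

Definition diff_quot_coef (c : nat -> C) (N i : nat) (y : C) : C :=
  sum_n (fun j => if Nat.ltb i j then c j * pow_n y (j - 1 - i) else RtoC 0) N.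

Definition diff_quot (c : nat -> C) (N : nat) (x y : C) : C :=
  sum_n (fun i => pow_n x i * diff_quot_coef c N i y) N.

Lemma Cminus_mul_geometric_sum (x y : C) N :
  (x - y) * sum_n (fun i => pow_n x i * pow_n y (N - i)) N = pow_n x (S N) - pow_n y (S N).
Proof.
  induction N as [|N IH].
  - rewrite sum_O, Nat.sub_diag, !pow_n_CS, !pow_n_C0. ring.
  - rewrite sum_n_CS, Nat.sub_diag, pow_n_C0.
    rewrite (sum_n_ext_loc _ (fun i => y * (pow_n x i * pow_n y (N - i))))
      by (intros k Hk; replace (S N - k)%nat with (S (N - k)) by lia; rewrite pow_n_CS; Cring).
    rewrite sum_n_Cmult_l.
    transitivity (y * ((x - y) * sum_n (fun i => pow_n x i * pow_n y (N - i)) N)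
                  + (x - y) * pow_n x (S N)); [ring|].
    rewrite IH, !(pow_n_CS _ (S N)). ring.
Qed.

Lemma diff_quot_mul (c : nat -> C) N x y X :
  diff_quot c N x y * X = sum_n (fun i => diff_quot_coef c N i y * (pow_n x i * X)) N.
Proof. unfold diff_quot. rewrite <- sum_n_Cmult_r. apply sum_n_ext. intros i. Cring. Qed.

Lemma diff_quot_mul_expand (c : nat -> C) N x y X :
  diff_quot c N x y * X = sum_n (fun i => pow_n x i *
    sum_n (fun j => if Nat.ltb i j then c j * (pow_n y (j - 1 - i) * X) else RtoC 0) N) N.
Proof.
  rewrite diff_quot_mul. apply sum_n_ext. intros i. cbv beta. unfold diff_quot_coef.
  rewrite <- sum_n_Cmult_r. etransitivity; [|apply sum_n_Cmult_l]. apply sum_n_ext. intros j.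
  destruct (Nat.ltb i j); Cring.
Qed.

Lemma diff_quot_coef_S (c : nat -> C) N i y : diff_quot_coef c (S N) i y =
  diff_quot_coef c N i y + if Nat.ltb i (S N) then c (S N) * pow_n y (N - i) else RtoC 0.
Proof.
  unfold diff_quot_coef. rewrite sum_n_CS. f_equal.
  destruct (Nat.ltb i (S N)); [do 2 f_equal; lia|reflexivity].
Qed.

Lemma diff_quot_coef_high (c : nat -> C) N i y : (N <= i)%nat -> diff_quot_coef c N i y = 0.
Proof.
  intros H. apply sum_n_C0. intros k Hk.
  destruct (Nat.ltb_spec i k); [lia|reflexivity].
Qed.

Lemma diff_quot_spec (c : nat -> C) N x y :
  (x - y) * diff_quot c N x y = peval c N x - peval c N y.
Proof.
  induction N as [|N IH].
  - unfold diff_quot, peval. rewrite !sum_O, diff_quot_coef_high, !pow_n_C0 by lia. ring.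
  - assert (HQ : diff_quot c (S N) x y = diff_quot c N x y
        + c (S N) * sum_n (fun i => pow_n x i * pow_n y (N - i)) N).
    { unfold diff_quot. rewrite sum_n_CS, (diff_quot_coef_high c (S N) (S N)), Cmult_0_r, Cplus_0_r
        by lia.
      rewrite <- sum_n_Cmult_l, <- sum_n_Cplus. apply sum_n_ext_loc. intros k Hk.
      rewrite diff_quot_coef_S. destruct (Nat.ltb_spec k (S N)); [Cring|lia]. }
    rewrite HQ. unfold peval in *. rewrite !sum_n_CS.
    transitivity ((x - y) * diff_quot c N x y
                  + c (S N) * ((x - y) * sum_n (fun i => pow_n x i * pow_n y (N - i)) N));
      [ring|].
    rewrite IH, Cminus_mul_geometric_sum. ring.
Qed.

Lemma precip_peval (c : nat -> C) n x :
  precip c n x = peval (fun j => Cconj (c (n - j)%nat)) n x.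
Proof.
  unfold precip, peval. rewrite sum_n_rev. apply sum_n_ext_loc. intros k Hk.
  replace (n - (n - k))%nat with k by lia. reflexivity.
Qed.

Lemma Cconj_peval (c : nat -> C) N x :
  Cconj (peval c N x) = sum_n (fun j => Cconj (c j) * pow_n (Cconj x) j) N.
Proof.
  unfold peval. rewrite Cconj_sum_n. apply sum_n_ext. intros j.
  rewrite Cmult_conj, Cconj_pow_n. reflexivity.
Qed.

Lemma Cconj_peval_eit (c : nat -> C) n t :
  Cconj (peval c n (eit t)) = pow_n (Cconj (eit t)) n * precip c n (eit t).
Proof.
  rewrite Cconj_peval. unfold precip. rewrite <- sum_n_Cmult_l.
  apply sum_n_ext_loc. intros k Hk.
  replace (pow_n (Cconj (eit t)) k) with (pow_n (eit t) (n - k) * pow_n (Cconj (eit t)) n)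
    by (rewrite pow_n_eit_mul_conj by lia; f_equal; lia).
  Cring.
Qed.

Lemma Cconj_precip_eit (c : nat -> C) n t :
  Cconj (precip c n (eit t)) = pow_n (Cconj (eit t)) n * peval c n (eit t).
Proof.
  unfold precip, peval. rewrite Cconj_sum_n, <- sum_n_Cmult_l.
  apply sum_n_ext_loc. intros k Hk.
  rewrite Cmult_conj, Cconj_conj, Cconj_pow_n, <- (pow_n_eit_mul_conj t k n) by lia. Cring.
Qed.

End Polynomials.

Section PolynomialDerivative.
Local Open Scope C_scope.

Definition deriv_coef (c : nat -> C) (j : nat) : C := INR (S j) * c (S j).

Lemma nat_to_ring_C k : @nat_to_ring C_Ring k = RtoC (INR k).
Proof.
  induction k as [|k IH]; [reflexivity|].
  rewrite nat_to_ring_Sn, IH, S_INR. apply C_ext; simpl; ring.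
Qed.

(* [C_NormedModule] and [AbsRing_NormedModule C_AbsRing] are distinct structures on [C];
   Coquelicot's derivative lemmas produce the latter. *)
Lemma is_derive_C_of_AbsRing (f : C -> C) (x l : C) :
  @is_derive C_AbsRing (AbsRing_NormedModule C_AbsRing) f x l ->
  @is_derive C_AbsRing C_NormedModule f x l.
Proof. intros [_ H]. split; [apply is_linear_scal_l|exact H]. Qed.

Lemma is_derive_monomial (c : C) (k : nat) (z : C) :
  @is_derive C_AbsRing C_NormedModule (fun y => c * pow_n y k) z
    (c * (INR k * pow_n z (pred k))).
Proof.
  apply is_derive_C_of_AbsRing.
  pose proof (@is_derive_mult C_AbsRing (fun _ => c) (fun y => pow_n y k) z _ _
    (is_derive_const _ _) (filterdiff_pow_n z k Cmult_comm) Cmult_comm) as H.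
  rewrite nat_to_ring_C in H. simpl in H.
  replace (c * (INR k * pow_n z (pred k))) with
    (plus (mult zero (pow_n z k)) (mult c (mult (RtoC (INR k)) (pow_n z (pred k)))))
    by (change (0 * pow_n z k + c * (INR k * pow_n z (pred k)) = c * (INR k * pow_n z (pred k)));
        ring).
  exact H.
Qed.

Lemma is_derive_peval (c : nat -> C) (N : nat) (z : C) : (1 <= N)%nat ->
  @is_derive C_AbsRing C_NormedModule (peval c N) z (peval (deriv_coef c) (N - 1) z).
Proof.
  intros HN.
  replace (peval (deriv_coef c) (N - 1) z)
    with (sum_n (fun k => c k * (INR k * pow_n z (pred k))) N).
  - exact (is_derive_sum_n (fun k y => c k * pow_n y k) N z _
             (fun k _ => is_derive_monomial (c k) k z)).
  - replace N with (S (N - 1)) at 1 by lia. rewrite sum_n_shift. unfold peval, deriv_coef.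
    rewrite (sum_n_ext _ (fun j => INR (S j) * c (S j) * pow_n z j))
      by (intros j; simpl pred; Cring).
    simpl. ring.
Qed.

End PolynomialDerivative.

Lemma triangular_solve (x : nat -> nat -> C) (y : nat -> C) (m : nat) :
  (forall j, (j <= m)%nat -> x j j <> RtoC 0) ->
  (forall j, (j <= m)%nat ->
     sum_n (fun i => Cmult (x j i) (y i)) j = (if Nat.eqb j m then RtoC 1 else RtoC 0)) ->
  (forall i, (i < m)%nat -> y i = RtoC 0) /\ y m = Cinv (x m m).
Proof.
  intros Hdiag Hsys.
  assert (Hrow : forall j, (j <= m)%nat -> (forall i, (i < j)%nat -> y i = RtoC 0) ->
                 Cmult (x j j) (y j) = if Nat.eqb j m then RtoC 1 else RtoC 0).
  { intros j Hj Hlow. etransitivity; [|exact (Hsys j Hj)].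
    destruct j as [|j]; [symmetry; apply sum_O|].
    rewrite sum_n_CS, sum_n_C0; [ring|]. intros i Hi. rewrite Hlow by lia. ring. }
  assert (Hlow : forall j, (j <= m)%nat -> forall i, (i < j)%nat -> y i = RtoC 0).
  { induction j as [|j IH]; intros Hj i Hi; [lia|].
    destruct (Nat.eq_dec i j) as [->|Hne]; [|apply IH; lia].
    specialize (Hrow j ltac:(lia) (IH ltac:(lia))).
    destruct (Nat.eqb_spec j m) as [E|E]; [lia|].
    replace (y j) with (Cmult (Cinv (x j j)) (Cmult (x j j) (y j)))
      by (field; apply Hdiag; lia).
    rewrite Hrow. ring. }
  split; [apply Hlow; lia|].
  specialize (Hrow m (le_n m) (Hlow m (le_n m))). rewrite Nat.eqb_refl in Hrow.
  replace (y m) with (Cmult (Cinv (x m m)) (Cmult (x m m) (y m)))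
    by (field; apply Hdiag; lia).
  rewrite Hrow. ring.
Qed.

Section Orthogonality.
Local Open Scope C_scope.
Variables (w : C -> C) (a : nat -> nat -> C).
Hypothesis moments_exist : forall m : Z, ex_cint_dm (fun zeta => cpowZ zeta m * w zeta).
Hypothesis lead_pos : forall n, Im (a n n) = 0 /\ 0 < Re (a n n).
Hypothesis orthonormal : forall m n : nat,
  is_circ_int (fun t => peval (a m) m (eit t) * Cconj (peval (a n) n (eit t)) * w (eit t))
    (if Nat.eqb m n then RtoC 1 else RtoC 0).

Definition moment (m : Z) : C := cint_dm (fun zeta => cpowZ zeta m * w zeta).

Definition peval_moment (c : nat -> C) (N k : nat) : C :=
  sum_n (fun j => c j * moment (Z.of_nat j - Z.of_nat k)) N.

Definition orth_moment (m k : nat) : C := if Nat.eqb k m then / a m m else 0.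

Lemma is_circ_int_moment m :
  is_circ_int (fun t => cpowZ (eit t) m * w (eit t)) (moment m).
Proof. apply is_circ_int_RInt, moments_exist. Qed.

Lemma is_circ_int_monomial_conj (j k : nat) :
  is_circ_int (fun t => pow_n (eit t) j * pow_n (Cconj (eit t)) k * w (eit t))
    (moment (Z.of_nat j - Z.of_nat k)).
Proof.
  eapply is_circ_int_ext; [|apply is_circ_int_moment]. intros t.
  rewrite cpowZ_eit_of_nat, cpowZ_eit_opp_nat, cpowZ_eit_add. reflexivity.
Qed.

Lemma is_circ_int_peval_conj_monomial (c : nat -> C) (N k : nat) :
  is_circ_int (fun t => peval c N (eit t) * pow_n (Cconj (eit t)) k * w (eit t))
    (peval_moment c N k).
Proof.
  eapply is_circ_int_ext; [|apply is_circ_int_sum; intros j _;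
    apply is_circ_int_Cmult_l, (is_circ_int_monomial_conj j k)].
  intros t. unfold peval. rewrite <- !sum_n_Cmult_r. apply sum_n_ext. intros j. Cring.
Qed.

Lemma lead_neq0 m : a m m <> 0.
Proof. intros H. destruct (lead_pos m) as [_ Hre]. rewrite H in Hre. simpl in Hre. lra. Qed.

Lemma Cconj_lead m : Cconj (a m m) = a m m.
Proof.
  destruct (lead_pos m) as [Him _]. unfold Im in Him.
  apply C_ext; simpl; [reflexivity|]. rewrite Him. ring.
Qed.

(* Orthonormality against [phi_j], [j <= m], is a triangular system in the
   integrals [int phi_m conj(zeta)^k w]. *)
Lemma is_circ_int_orth_conj_monomial (m k : nat) : (k <= m)%nat ->
  is_circ_int (fun t => peval (a m) m (eit t) * pow_n (Cconj (eit t)) k * w (eit t))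
    (orth_moment m k).
Proof.
  intros Hk.
  destruct (triangular_solve (fun j i => Cconj (a j i)) (peval_moment (a m) m) m)
    as [Hlow Hm].
  - intros j _. rewrite Cconj_lead. apply lead_neq0.
  - intros j Hj. rewrite Nat.eqb_sym.
    eapply is_circ_int_unique; [|apply orthonormal].
    eapply is_circ_int_ext; [|apply is_circ_int_sum; intros i _;
      apply is_circ_int_Cmult_l, (is_circ_int_peval_conj_monomial (a m) m i)].
    intros t. simpl. rewrite Cconj_peval, <- sum_n_Cmult_l, <- sum_n_Cmult_r.
    apply sum_n_ext. intros i. Cring.
  - eapply is_circ_int_eq; [|apply is_circ_int_peval_conj_monomial].
    unfold orth_moment. destruct (Nat.eqb_spec k m) as [->|Hne].
    + rewrite Hm, Cconj_lead. reflexivity.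
    + apply Hlow. lia.
Qed.

Hypothesis weight_real : forall t, Im (w (eit t)) = 0.

(* [w] is real on the circle, so this is the conjugate of the previous integral. *)
Lemma is_circ_int_monomial_conj_orth (m k : nat) : (k <= m)%nat ->
  is_circ_int (fun t => pow_n (eit t) k * Cconj (peval (a m) m (eit t)) * w (eit t))
    (orth_moment m k).
Proof.
  intros Hk.
  eapply is_circ_int_ext;
    [|eapply is_circ_int_eq; [|apply is_circ_int_Cconj, is_circ_int_orth_conj_monomial, Hk]].
  - intros t. assert (Hw : Cconj (w (eit t)) = w (eit t)).
    { pose proof (weight_real t) as H. unfold Im in H.
      apply C_ext; simpl; [reflexivity|]. rewrite H. ring. }
    cbv beta. rewrite !Cmult_conj, Cconj_pow_n, Cconj_conj, Hw. ring.
  - unfold orth_moment. destruct (Nat.eqb k m); [|apply C_ext; simpl; ring].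
    rewrite Cinv_conj by apply lead_neq0. rewrite Cconj_lead. reflexivity.
Qed.

End Orthogonality.

(** * The Christoffel-Darboux kernel *)

Section ChristoffelDarboux.
Local Open Scope C_scope.
Variables (w : C -> C) (a : nat -> nat -> C).
Hypothesis moments_exist : forall m : Z, ex_cint_dm (fun zeta => cpowZ zeta m * w zeta).
Hypothesis lead_pos : forall n, Im (a n n) = 0 /\ 0 < Re (a n n).
Hypothesis orthonormal : forall m n : nat,
  is_circ_int (fun t => peval (a m) m (eit t) * Cconj (peval (a n) n (eit t)) * w (eit t))
    (if Nat.eqb m n then RtoC 1 else RtoC 0).
Hypothesis weight_real : forall t, Im (w (eit t)) = 0.
Variables (n : nat) (z : C).
Hypothesis n_pos : (1 <= n)%nat.

Local Notation phi := (peval (a n) n).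
Local Notation phi_star := (precip (a n) n).

Definition phi_star_coef (j : nat) : C := Cconj (a n (n - j)%nat).

Lemma precip_phi_star_coef x : phi_star x = peval phi_star_coef n x.
Proof. apply precip_peval. Qed.

(* [(phi x phi_star y - phi_star x phi y) / (x - y)], as a polynomial. *)
Definition cd_quot (x y : C) : C :=
  diff_quot (a n) n x y * phi_star y - diff_quot phi_star_coef n x y * phi y.

(* [K_n(z, zeta)] for [zeta = e^{it}]; by the Christoffel-Darboux formula it equals
   [sum_(k<n) phi_k(z) conj(phi_k(zeta))], but only its reproducing property is used. *)
Definition cd_kernel (t : R) : C := pow_n (Cconj (eit t)) (n - 1) * cd_quot z (eit t).

Definition cd_coef (i : nat) : C :=
  diff_quot_coef (a n) n i z * phi_star z - diff_quot_coef phi_star_coef n i z * phi z.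

Lemma cd_quot_spec x y : (x - y) * cd_quot x y = phi x * phi_star y - phi_star x * phi y.
Proof.
  unfold cd_quot.
  transitivity ((x - y) * diff_quot (a n) n x y * phi_star y
                - (x - y) * diff_quot phi_star_coef n x y * phi y); [ring|].
  rewrite !diff_quot_spec, <- !precip_phi_star_coef. ring.
Qed.

Lemma cd_quot_swap y :
  cd_quot z y = diff_quot (a n) n y z * phi_star z - diff_quot phi_star_coef n y z * phi z.
Proof.
  destruct (Ceq_dec y z) as [->|Hne]; [reflexivity|].
  assert (Hzy : z - y <> 0)
    by (intros H; apply Hne; replace y with (z - (z - y)) by ring; rewrite H; ring).
  apply (Cmult_reg_l (z - y)); [exact Hzy|].
  rewrite cd_quot_spec.
  transitivity (- ((y - z) * diff_quot (a n) n y z * phi_star z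
                   - (y - z) * diff_quot phi_star_coef n y z * phi z)); [|ring].
  rewrite !diff_quot_spec, <- !precip_phi_star_coef. ring.
Qed.

Lemma cd_kernel_expand_z t : cd_kernel t * w (eit t) =
  sum_n (fun i => pow_n z i * sum_n (fun j => if Nat.ltb i j then
     a n j * (pow_n (eit t) (j - i) * Cconj (phi (eit t)) * w (eit t))
     - phi_star_coef j * (phi (eit t) * pow_n (Cconj (eit t)) (n - (j - i)) * w (eit t))
     else RtoC 0) n) n.
Proof.
  unfold cd_kernel, cd_quot.
  transitivity (
    diff_quot (a n) n z (eit t) * (pow_n (Cconj (eit t)) (n - 1) * phi_star (eit t) * w (eit t))
    - diff_quot phi_star_coef n z (eit t) * (pow_n (Cconj (eit t)) (n - 1) * phi (eit t) * w (eit t)));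
    [ring|].
  rewrite !diff_quot_mul_expand, <- sum_n_Cminus. apply sum_n_ext_loc. intros i Hi.
  cbv beta. match goal with |- ?x * ?A - ?x * ?B = _ =>
    transitivity (x * (A - B)); [Cring|f_equal] end.
  rewrite <- sum_n_Cminus. apply sum_n_ext_loc. intros j Hj.
  destruct (Nat.ltb_spec i j) as [Hij|Hij]; [|Cring].
  assert (E1 : pow_n (eit t) (j - i) = eit t * pow_n (eit t) (j - 1 - i))
    by (rewrite <- pow_n_CS; f_equal; lia).
  assert (E2 : pow_n (eit t) (j - 1 - i) * pow_n (Cconj (eit t)) (n - 1)
               = pow_n (Cconj (eit t)) (n - (j - i)))
    by (rewrite pow_n_eit_mul_conj by lia; f_equal; lia).
  assert (E3 : pow_n (Cconj (eit t)) n = Cconj (eit t) * pow_n (Cconj (eit t)) (n - 1))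
    by (rewrite <- pow_n_CS; f_equal; lia).
  rewrite Cconj_peval_eit, E1, E3, <- E2.
  transitivity (a n j * (eit t * Cconj (eit t)) * (pow_n (eit t) (j - 1 - i)
                  * pow_n (Cconj (eit t)) (n - 1) * phi_star (eit t) * w (eit t))
                - phi_star_coef j * (phi (eit t) * (pow_n (eit t) (j - 1 - i)
                  * pow_n (Cconj (eit t)) (n - 1)) * w (eit t)));
    [rewrite eit_mul_conj; Cring|Cring].
Qed.

Lemma is_circ_int_cd_kernel : is_circ_int (fun t => cd_kernel t * w (eit t)) 1.
Proof.
  eapply is_circ_int_ext; [intros t; symmetry; apply cd_kernel_expand_z|].
  eapply is_circ_int_eq; [|apply is_circ_int_sum; intros i Hi; apply is_circ_int_Cmult_l;
    apply is_circ_int_sum with (l := fun j => if Nat.ltb i j then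
      a n j * orth_moment a n (j - i) - phi_star_coef j * orth_moment a n (n - (j - i)) else RtoC 0);
    intros j Hj; destruct (Nat.ltb_spec i j) as [Hij|Hij];
      [apply is_circ_int_minus; apply is_circ_int_Cmult_l;
        [apply (is_circ_int_monomial_conj_orth w a moments_exist lead_pos orthonormal weight_real)
        |apply (is_circ_int_orth_conj_monomial w a moments_exist lead_pos orthonormal)]; lia
      |apply is_circ_int_0]].
  assert (Horth : forall k, (0 < k < n)%nat -> orth_moment a n k = 0)
    by (intros k Hk; unfold orth_moment; destruct (Nat.eqb_spec k n); [lia|reflexivity]).
  rewrite (sum_n_single _ n 0); [|lia|].
  2: { intros i Hi Hi0. rewrite sum_n_C0; [ring|]. intros j Hj.
       destruct (Nat.ltb_spec i j); [|reflexivity].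
       rewrite !Horth by lia. ring. }
  rewrite (sum_n_single _ n n); [|lia|].
  2: { intros j Hj Hjn. destruct (Nat.ltb_spec 0 j); [|reflexivity].
       rewrite !Horth by lia. ring. }
  destruct (Nat.ltb_spec 0 n); [|lia].
  rewrite Nat.sub_0_r, Nat.sub_diag.
  unfold orth_moment. rewrite Nat.eqb_refl.
  destruct (Nat.eqb_spec 0 n); [lia|].
  rewrite pow_n_C0. field. apply lead_neq0, lead_pos.
Qed.

Lemma Cminus_eit_mul_cd_kernel t : (eit t - z) * cd_kernel t =
  - (pow_n (Cconj (eit t)) (n - 1) * (phi z * phi_star (eit t) - phi_star z * phi (eit t))).
Proof.
  unfold cd_kernel. rewrite <- cd_quot_spec. ring.
Qed.

Lemma cd_kernel_mul_peval (c : nat -> C) t :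
  peval c (n - 1) (eit t) * cd_kernel t * w (eit t) =
  peval c (n - 1) z * (cd_kernel t * w (eit t))
  + (phi_star z * sum_n (fun i => diff_quot_coef c (n - 1) i z *
        (phi (eit t) * pow_n (Cconj (eit t)) (n - 1 - i) * w (eit t))) (n - 1)
     - phi z * sum_n (fun i => diff_quot_coef c (n - 1) i z *
        (pow_n (eit t) (S i) * Cconj (phi (eit t)) * w (eit t))) (n - 1)).
Proof.
  replace (peval c (n - 1) (eit t))
    with (peval c (n - 1) z + (eit t - z) * diff_quot c (n - 1) (eit t) z)
    by (rewrite diff_quot_spec; ring).
  transitivity (peval c (n - 1) z * (cd_kernel t * w (eit t))
    + diff_quot c (n - 1) (eit t) z * ((eit t - z) * cd_kernel t * w (eit t))); [ring|].
  rewrite Cminus_eit_mul_cd_kernel. f_equal.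
  transitivity (phi_star z * (diff_quot c (n - 1) (eit t) z
                  * (pow_n (Cconj (eit t)) (n - 1) * phi (eit t) * w (eit t)))
                - phi z * (diff_quot c (n - 1) (eit t) z
                  * (pow_n (Cconj (eit t)) (n - 1) * phi_star (eit t) * w (eit t)))); [ring|].
  rewrite !diff_quot_mul. f_equal; f_equal; apply sum_n_ext_loc; intros i Hi; f_equal.
  - rewrite <- (pow_n_eit_mul_conj t i (n - 1)) by lia. Cring.
  - assert (E : pow_n (Cconj (eit t)) n = Cconj (eit t) * pow_n (Cconj (eit t)) (n - 1))
      by (rewrite <- pow_n_CS; f_equal; lia).
    rewrite Cconj_peval_eit, E, pow_n_CS.
    transitivity (eit t * Cconj (eit t) * (pow_n (eit t) i
                    * pow_n (Cconj (eit t)) (n - 1) * phi_star (eit t)) * w (eit t));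
      [rewrite eit_mul_conj; Cring|Cring].
Qed.

Lemma is_circ_int_peval_cd_kernel (c : nat -> C) :
  is_circ_int (fun t => peval c (n - 1) (eit t) * cd_kernel t * w (eit t)) (peval c (n - 1) z).
Proof.
  eapply is_circ_int_ext; [intros t; symmetry; apply cd_kernel_mul_peval|].
  eapply is_circ_int_eq;
    [|apply is_circ_int_plus; [apply is_circ_int_Cmult_l, is_circ_int_cd_kernel|];
      apply is_circ_int_minus; apply is_circ_int_Cmult_l, is_circ_int_sum; intros i Hi;
      apply is_circ_int_Cmult_l;
      [apply (is_circ_int_orth_conj_monomial w a moments_exist lead_pos orthonormal)
      |apply (is_circ_int_monomial_conj_orth w a moments_exist lead_pos orthonormal
                weight_real)]; lia].
  rewrite !sum_n_C0; [ring| |].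
  - intros i Hi. unfold orth_moment. destruct (Nat.eqb_spec (S i) n); [|ring].
    rewrite diff_quot_coef_high by lia. ring.
  - intros i Hi. unfold orth_moment. destruct (Nat.eqb_spec (n - 1 - i) n); [lia|ring].
Qed.

Lemma cd_kernel_expand_eit t :
  cd_kernel t = sum_n (fun i => cd_coef i * pow_n (Cconj (eit t)) (n - 1 - i)) (n - 1).
Proof.
  unfold cd_kernel. rewrite cd_quot_swap. unfold diff_quot.
  transitivity (sum_n (fun i => cd_coef i * (pow_n (eit t) i * pow_n (Cconj (eit t)) (n - 1))) n).
  - rewrite <- !sum_n_Cmult_r, <- sum_n_Cminus, <- sum_n_Cmult_l.
    apply sum_n_ext. intros i. unfold cd_coef. Cring.
  - replace n with (S (n - 1)) at 1 by lia. rewrite sum_n_CS.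
    replace (cd_coef (S (n - 1))) with (RtoC 0)
      by (unfold cd_coef; rewrite !diff_quot_coef_high by lia; ring).
    rewrite Cmult_0_l, Cplus_0_r. apply sum_n_ext_loc. intros i Hi.
    rewrite pow_n_eit_mul_conj by lia. reflexivity.
Qed.

Lemma mul_cd_kernel (f : R -> C) t : f t * cd_kernel t * w (eit t) =
  sum_n (fun i => cd_coef i * (f t * pow_n (Cconj (eit t)) (n - 1 - i) * w (eit t))) (n - 1).
Proof.
  rewrite cd_kernel_expand_eit, <- sum_n_Cmult_l, <- sum_n_Cmult_r.
  apply sum_n_ext. intros i. Cring.
Qed.

Lemma is_circ_int_phi_cd_kernel :
  is_circ_int (fun t => phi (eit t) * cd_kernel t * w (eit t)) 0.
Proof.
  eapply is_circ_int_ext; [intros t; symmetry; apply (mul_cd_kernel (fun t => phi (eit t)))|].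
  eapply is_circ_int_eq; [|apply is_circ_int_sum; intros i Hi; apply is_circ_int_Cmult_l;
    apply (is_circ_int_orth_conj_monomial w a moments_exist lead_pos orthonormal); lia].
  apply sum_n_C0. intros i Hi. unfold orth_moment.
  destruct (Nat.eqb_spec (n - 1 - i) n); [lia|ring].
Qed.

(* Integrating [phi_(n-1) K_n] both by the reproducing property and term by term. *)
Lemma cd_coef_0 : cd_coef 0 = a (n - 1)%nat (n - 1)%nat * peval (a (n - 1)%nat) (n - 1) z.
Proof.
  assert (Hk := lead_neq0 a lead_pos (n - 1)).
  replace (cd_coef 0) with (a (n - 1)%nat (n - 1)%nat * (cd_coef 0 * / a (n - 1)%nat (n - 1)%nat))
    by (field; exact Hk).
  f_equal. eapply is_circ_int_unique; [|apply is_circ_int_peval_cd_kernel].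
  eapply is_circ_int_ext;
    [intros t; symmetry; apply (mul_cd_kernel (fun t => peval (a (n - 1)%nat) (n - 1) (eit t)))|].
  eapply is_circ_int_eq; [|apply is_circ_int_sum; intros i Hi; apply is_circ_int_Cmult_l;
    apply (is_circ_int_orth_conj_monomial w a moments_exist lead_pos orthonormal (n - 1)); lia].
  rewrite (sum_n_single _ (n - 1) 0); [|lia|].
  - unfold orth_moment. rewrite Nat.sub_0_r, Nat.eqb_refl. reflexivity.
  - intros i Hi Hi0. unfold orth_moment.
    destruct (Nat.eqb_spec (n - 1 - i) (n - 1)); [lia|ring].
Qed.

Variables (v dv : C -> C).
Hypothesis w_exp : forall t, w (eit t) = cexp (- v (eit t)).
Hypothesis v_derive : forall t, @is_derive C_AbsRing C_NormedModule v (eit t) (dv (eit t)).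

Definition dv_quot (y : C) : C := (dv z - dv y) / (z - y).

Hypothesis dv_quot_moments_exist :
  forall m : Z, ex_cint_dm (fun zeta => dv_quot zeta * cpowZ zeta m * w zeta).

Definition dv_moment (m : Z) : C := cint_dm (fun zeta => dv_quot zeta * cpowZ zeta m * w zeta).

Lemma dv_quot_mul y : dv_quot y * (z - y) = dv z - dv y.
Proof.
  unfold dv_quot. destruct (Ceq_dec y z) as [->|Hne].
  - replace (z - z) with (RtoC 0) by ring. ring.
  - field. intros H. apply Hne. replace y with (z - (z - y)) by ring. rewrite H. ring.
Qed.

Lemma is_circ_int_dv_moment m :
  is_circ_int (fun t => dv_quot (eit t) * cpowZ (eit t) m * w (eit t)) (dv_moment m).
Proof. apply is_circ_int_RInt, dv_quot_moments_exist. Qed.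

Lemma is_circ_int_dv_cpowZ m :
  is_circ_int (fun t => dv (eit t) * cpowZ (eit t) m * w (eit t))
    (dv z * moment w m - (z * dv_moment m - dv_moment (m + 1))).
Proof.
  eapply is_circ_int_ext; [|apply is_circ_int_minus;
    [apply is_circ_int_Cmult_l, is_circ_int_moment, moments_exist
    |apply is_circ_int_minus; [apply is_circ_int_Cmult_l|]; apply is_circ_int_dv_moment]].
  intros t. simpl. rewrite cpowZ_eit_succ.
  transitivity (dv z * (cpowZ (eit t) m * w (eit t))
    - dv_quot (eit t) * (z - eit t) * (cpowZ (eit t) m * w (eit t))); [ring|].
  rewrite dv_quot_mul. ring.
Qed.

Lemma is_circ_int_dv_monomial_conj (j k : nat) :
  is_circ_int (fun t => dv (eit t) * (pow_n (eit t) j * pow_n (Cconj (eit t)) k) * w (eit t))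
    (IZR (Z.of_nat j - Z.of_nat k - 1) * moment w (Z.of_nat j - Z.of_nat k - 1)).
Proof.
  set (m := (Z.of_nat j - Z.of_nat k - 1)%Z).
  assert (Hdv := is_circ_int_dv_cpowZ (m + 1)).
  rewrite <- (integral_dv_cpowZ_by_parts w v dv w_exp v_derive m _ _
                (is_circ_int_moment w moments_exist m) Hdv).
  eapply is_circ_int_ext; [|exact Hdv]. intros t.
  rewrite cpowZ_eit_of_nat, cpowZ_eit_opp_nat, cpowZ_eit_add. unfold m. do 3 f_equal. lia.
Qed.

Lemma is_circ_int_dv_phi_conj_monomial k :
  is_circ_int (fun t => dv (eit t) * (phi (eit t) * pow_n (Cconj (eit t)) k) * w (eit t))
    (peval_moment w (deriv_coef (a n)) (n - 1) k - INR (S k) * peval_moment w (a n) n (S k)).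
Proof.
  eapply is_circ_int_eq; [|eapply is_circ_int_ext; [|apply is_circ_int_sum; intros j Hj;
    apply (is_circ_int_Cmult_l (a n j)), (is_circ_int_dv_monomial_conj j k)]].
  2: { intros t. simpl. unfold peval.
       rewrite <- sum_n_Cmult_r, <- sum_n_Cmult_l, <- sum_n_Cmult_r.
       apply sum_n_ext. intros j. Cring. }
  unfold peval_moment.
  transitivity (sum_n (fun j => a n j * INR j * moment w (Z.of_nat j - Z.of_nat k - 1)) n
    - INR (S k) * sum_n (fun j => a n j * moment w (Z.of_nat j - Z.of_nat (S k))) n).
  - rewrite <- sum_n_Cmult_l, <- sum_n_Cminus. apply sum_n_ext. intros j.
    replace (Z.of_nat j - Z.of_nat (S k))%Z with (Z.of_nat j - Z.of_nat k - 1)%Z by lia.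
    rewrite !minus_IZR, <- !INR_IZR_INZ, S_INR. apply C_ext; simpl; ring.
  - f_equal. replace n with (S (n - 1)) at 1 by lia. rewrite sum_n_shift.
    change (INR 0) with 0%R. rewrite Cmult_0_r, Cmult_0_l, Cplus_0_l.
    apply sum_n_ext. intros j. unfold deriv_coef.
    replace (Z.of_nat (S j) - Z.of_nat k - 1)%Z with (Z.of_nat j - Z.of_nat k)%Z by lia.
    Cring.
Qed.

Lemma peval_moment_phi k : (k <= n)%nat -> peval_moment w (a n) n k = orth_moment a n k.
Proof.
  intros Hk. eapply is_circ_int_unique; [apply is_circ_int_peval_conj_monomial, moments_exist|].
  apply (is_circ_int_orth_conj_monomial w a moments_exist lead_pos orthonormal n k Hk).
Qed.

Lemma sum_cd_coef_peval_moment (c : nat -> C) :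
  sum_n (fun i => cd_coef i * peval_moment w c (n - 1) (n - 1 - i)) (n - 1) = peval c (n - 1) z.
Proof.
  eapply is_circ_int_unique; [|apply is_circ_int_peval_cd_kernel].
  eapply is_circ_int_ext; [intros t; symmetry; apply (mul_cd_kernel (fun t => peval c (n - 1) (eit t)))|].
  apply is_circ_int_sum. intros i Hi.
  apply is_circ_int_Cmult_l, is_circ_int_peval_conj_monomial, moments_exist.
Qed.

Lemma is_circ_int_dv_phi_cd_kernel :
  is_circ_int (fun t => dv (eit t) * (phi (eit t) * cd_kernel t) * w (eit t))
    (peval (deriv_coef (a n)) (n - 1) z - INR n * (cd_coef 0 * / a n n)).
Proof.
  eapply is_circ_int_eq; [|eapply is_circ_int_ext; [|eapply (is_circ_int_sum _ _ (n - 1));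
    intros i Hi; apply (is_circ_int_Cmult_l (cd_coef i)),
    (is_circ_int_dv_phi_conj_monomial (n - 1 - i))]].
  2: { intros t. symmetry.
       transitivity (dv (eit t) * (phi (eit t) * cd_kernel t * w (eit t))); [Cring|].
       rewrite (mul_cd_kernel (fun t => phi (eit t))), <- sum_n_Cmult_l.
       apply sum_n_ext. intros i. Cring. }
  transitivity (sum_n (fun i => cd_coef i * peval_moment w (deriv_coef (a n)) (n - 1) (n - 1 - i)) (n - 1)
    - sum_n (fun i => cd_coef i * (INR (S (n - 1 - i)) * peval_moment w (a n) n (S (n - 1 - i)))) (n - 1)).
  - rewrite <- sum_n_Cminus. apply sum_n_ext. intros i. Cring.
  - rewrite sum_cd_coef_peval_moment. f_equal.
    rewrite (sum_n_single _ (n - 1) 0); [|lia|].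
    + rewrite peval_moment_phi by lia. unfold orth_moment.
      replace (S (n - 1 - 0)) with n by lia. rewrite Nat.eqb_refl. Cring.
    + intros i Hi Hi0. rewrite peval_moment_phi by lia. unfold orth_moment.
      destruct (Nat.eqb_spec (S (n - 1 - i)) n); [lia|Cring].
Qed.

Lemma ex_circ_int_dv_quot_peval (c1 c2 : nat -> C) N1 N2 (s : Z) : exists l,
  is_circ_int (fun t => dv_quot (eit t) * (peval c1 N1 (eit t) * peval c2 N2 (eit t)
                                           * cpowZ (eit t) s) * w (eit t)) l.
Proof.
  eexists.
  apply (is_circ_int_ext (fun t => sum_n (fun j => c1 j * sum_n (fun k => c2 k *
    (dv_quot (eit t) * cpowZ (eit t) (Z.of_nat j + Z.of_nat k + s) * w (eit t))) N2) N1)).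
  - intros t. symmetry. unfold peval.
    set (P2 := sum_n (fun k => c2 k * pow_n (eit t) k) N2).
    set (K := dv_quot (eit t) * cpowZ (eit t) s * w (eit t)).
    transitivity (sum_n (fun j => c1 j * pow_n (eit t) j) N1 * (P2 * K)); [unfold K; ring|].
    rewrite <- sum_n_Cmult_r. apply sum_n_ext. intros j.
    transitivity (c1 j * (P2 * (pow_n (eit t) j * K))); [Cring|f_equal].
    unfold P2. rewrite <- sum_n_Cmult_r. apply sum_n_ext. intros k.
    unfold K. rewrite !cpowZ_eit_of_nat, <- !cpowZ_eit_add. Cring.
  - apply is_circ_int_sum. intros j _. apply is_circ_int_Cmult_l, is_circ_int_sum.
    intros k _. apply is_circ_int_Cmult_l, is_circ_int_dv_moment.
Qed.

Lemma dv_phi_cd_kernel_eit t :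
  Ci * phi z * (dv_quot (eit t) * (phi (eit t) * Cconj (phi (eit t))) * w (eit t)
                 * (Ci * eit t))
  - Ci * phi_star z * (dv_quot (eit t) * (phi (eit t) * Cconj (phi_star (eit t))) * w (eit t)
                        * (Ci * eit t)) =
  dv (eit t) * (phi (eit t) * cd_kernel t) * w (eit t)
  - dv z * (phi (eit t) * cd_kernel t * w (eit t)).
Proof.
  rewrite Cconj_peval_eit, Cconj_precip_eit.
  replace (pow_n (Cconj (eit t)) n) with (Cconj (eit t) * pow_n (Cconj (eit t)) (n - 1))
    by (rewrite <- pow_n_CS; f_equal; lia).
  transitivity (Ci * Ci * (eit t * Cconj (eit t)) * dv_quot (eit t) * phi (eit t) * w (eit t)
    * pow_n (Cconj (eit t)) (n - 1) * (phi z * phi_star (eit t) - phi_star z * phi (eit t)));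
    [ring|].
  rewrite eit_mul_conj, <- cd_quot_spec.
  transitivity (Ci * Ci * (dv_quot (eit t) * (z - eit t)) * (phi (eit t) * cd_kernel t * w (eit t)));
    [unfold cd_kernel; ring|].
  rewrite dv_quot_mul. replace (Ci * Ci) with (- RtoC 1) by (apply C_ext; simpl; ring). ring.
Qed.

Lemma phi_derivative_formula :
  INR n * (a (n - 1)%nat (n - 1)%nat / a n n) * peval (a (n - 1)%nat) (n - 1) z
  - Ci * phi_star z * cint_dz (fun zeta =>
      (dv z - dv zeta) / (z - zeta) * (phi zeta * Cconj (phi_star zeta)) * w zeta)
  + Ci * phi z * cint_dz (fun zeta =>
      (dv z - dv zeta) / (z - zeta) * (phi zeta * Cconj (phi zeta)) * w zeta)
  = peval (deriv_coef (a n)) (n - 1) z.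
Proof.
  set (X t := dv_quot (eit t) * (phi (eit t) * Cconj (phi_star (eit t))) * w (eit t)
              * (Ci * eit t)).
  set (Y t := dv_quot (eit t) * (phi (eit t) * Cconj (phi (eit t))) * w (eit t)
              * (Ci * eit t)).
  assert (HX : exists lX, is_circ_int X lX).
  { destruct (ex_circ_int_dv_quot_peval (a n) (a n) n n (1 - Z.of_nat n)) as [l Hl].
    exists (Ci * l). eapply is_circ_int_ext; [|apply is_circ_int_Cmult_l, Hl].
    intros t. unfold X. rewrite Cconj_precip_eit, <- eit_mul_conj_pow_n. ring. }
  assert (HY : exists lY, is_circ_int Y lY).
  { destruct (ex_circ_int_dv_quot_peval (a n) phi_star_coef n n (1 - Z.of_nat n)) as [l Hl].
    exists (Ci * l). eapply is_circ_int_ext; [|apply is_circ_int_Cmult_l, Hl].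
    intros t. unfold Y. rewrite Cconj_peval_eit, <- eit_mul_conj_pow_n, precip_phi_star_coef.
    ring. }
  destruct HX as [lX HX], HY as [lY HY].
  replace (cint_dz _) with lX by (symmetry; apply (is_RInt_unique (V := C_R_CompleteNormedModule)), HX).
  replace (cint_dz _) with lY by (symmetry; apply (is_RInt_unique (V := C_R_CompleteNormedModule)), HY).
  assert (E := is_circ_int_unique (fun t => Ci * phi z * Y t - Ci * phi_star z * X t) _ _
    (is_circ_int_minus _ _ _ _ (is_circ_int_Cmult_l _ _ _ HY) (is_circ_int_Cmult_l _ _ _ HX))
    (is_circ_int_ext _ _ _ (fun t => eq_sym (dv_phi_cd_kernel_eit t))
       (is_circ_int_minus _ _ _ _ is_circ_int_dv_phi_cd_kernel
          (is_circ_int_Cmult_l (dv z) _ _ is_circ_int_phi_cd_kernel)))).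
  rewrite cd_coef_0 in E.
  transitivity (INR n * (a (n - 1)%nat (n - 1)%nat / a n n) * peval (a (n - 1)%nat) (n - 1) z
                + (Ci * phi z * lY - Ci * phi_star z * lX)); [ring|].
  rewrite E. field. apply lead_neq0, lead_pos.
Qed.

End ChristoffelDarboux.

Theorem theorem2p1
  (U : C -> Prop) (w v dv : C -> C) (a : nat -> nat -> C)
  (HUopen : open U)
  (HUcirc : forall z, unit_circle z -> U z)
  (Hwpos : forall t, Im (w (eit t)) = 0 /\ 0 < Re (w (eit t)))
  (Hwnorm : @is_RInt C_R_NormedModule (fun t => w (eit t)) 0 (2 * PI) (RtoC 1))
  (Hwdiff : forall z, U z -> @ex_derive C_AbsRing C_NormedModule w z)
  (Hwv : forall z, U z -> w z = cexp (Copp (v z)))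
  (Hdv : forall z, U z -> @is_derive C_AbsRing C_NormedModule v z (dv z))
  (Hmom : forall m : Z, ex_cint_dm (fun zeta => Cmult (cpowZ zeta m) (w zeta)))
  (Hint : forall (z : C) (m : Z), U z ->
     ex_cint_dm (fun zeta =>
       Cmult (Cmult (Cdiv (Cminus (dv z) (dv zeta)) (Cminus z zeta)) (cpowZ zeta m))
             (w zeta)))
  (Hdeg : forall n k, (n < k)%nat -> a n k = (RtoC 0))
  (Hlead : forall n, Im (a n n) = 0 /\ 0 < Re (a n n))
  (Horth : forall m n : nat,
     @is_RInt C_R_NormedModule
       (fun t => Cmult (Cmult (peval (a m) m (eit t)) (Cconj (peval (a n) n (eit t))))
                       (w (eit t)))
       0 (2 * PI) (if Nat.eqb m n then (RtoC 1) else (RtoC 0))) :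
  forall (n : nat) (z : C), (1 <= n)%nat -> U z ->
  @is_derive C_AbsRing C_NormedModule (peval (a n) n) z
    (Cplus
      (Cminus
        (Cmult (Cmult (RtoC (INR n)) (Cdiv (a (n - 1)%nat (n - 1)%nat) (a n n)))
               (peval (a (n - 1)%nat) (n - 1) z))
        (Cmult (Cmult Ci (precip (a n) n z))
          (cint_dz (fun zeta =>
             Cmult (Cmult (Cdiv (Cminus (dv z) (dv zeta)) (Cminus z zeta))
                          (Cmult (peval (a n) n zeta) (Cconj (precip (a n) n zeta))))
                   (w zeta)))))
      (Cmult (Cmult Ci (peval (a n) n z))
        (cint_dz (fun zeta =>
           Cmult (Cmult (Cdiv (Cminus (dv z) (dv zeta)) (Cminus z zeta))
                        (Cmult (peval (a n) n zeta) (Cconj (peval (a n) n zeta))))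
                 (w zeta))))).
Proof.
  intros n z Hn Hz.
  assert (Hcirc : forall t, U (eit t)) by (intros t; apply HUcirc, unit_circle_eit).
  rewrite (phi_derivative_formula w a Hmom Hlead Horth (fun t => proj1 (Hwpos t)) n z Hn v dv
             (fun t => Hwv _ (Hcirc t)) (fun t => Hdv _ (Hcirc t)) (fun m => Hint z m Hz)).
  apply (is_derive_peval (a n) n z Hn).
Qed.
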